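(* Let $\mathcal{M}$ be an $n$-abelian category, $\mathcal{A}$ an abelian category and $F:\mathcal{M}\to\mathcal{A}$ a covariant additive functor. (i) If $F$ is left $n$-exact and $f:X\to Y$ is a weak kernel of $g:Y\to Z$, then $F(X)\xrightarrow{F(f)}F(Y)\xrightarrow{F(g)}F(Z)$ is exact. (ii) If $F$ is right $n$-exact and $g:Y\to Z$ is a weak cokernel of $f:X\to Y$, then $F(X)\xrightarrow{F(f)}F(Y)\xrightarrow{F(g)}F(Z)$ is exact.
   Context: A weak cokernel of $f:A\to B$ is a morphism $g:B\to C$ such that $\mathcal{M}(C,W)\to\mathcal{M}(B,W)\to\mathcal{M}(A,W)$ is exact for all $W$ (in particular $gf=0$); a weak kernel is defined dually. A complex $X^0\xrightarrow{d^0}\cdots\xrightarrow{d^n}X^{n+1}$ is right $n$-exact if $0\to\mathcal{M}(X^{n+1},W)\to\cdots\to\mathcal{M}(X^0,W)$ is exact for all $W$, left $n$-exact if $0\to\mathcal{M}(W,X^0)\to\cdots\to\mathcal{M}(W,X^{n+1})$ is exact for all $W$. $F$ is left $n$-exact if it sends left $n$-exact sequences to exact sequences $0\to F(X^0)\to\cdots\to F(X^{n+1})$, and right $n$-exact if it sends right $n$-exact sequences to exact sequences $F(X^0)\to\cdots\to F(X^{n+1})\to0$. An $n$-abelian category is an idempotent complete additive category in which every morphism has an $n$-kernel and an $n$-cokernel, and in which every monomorphism (resp. epimorphism) together with any of its $n$-cokernels (resp. $n$-kernels) forms an $n$-exact sequence. *)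

From HB Require Import structures.
From mathcomp Require Import all_boot all_algebra.
Set Implicit Arguments. Unset Strict Implicit. Unset Printing Implicit Defensive.
Import GRing.Theory.
Local Open Scope ring_scope.

Record preadd := PreAdd {
  Ob :> Type;
  Hom : Ob -> Ob -> zmodType;
  idm : forall a, Hom a a;
  comp : forall a b c, Hom b c -> Hom a b -> Hom a c;
  compA : forall a b c d (f : Hom c d) (g : Hom b c) (h : Hom a b),
      comp f (comp g h) = comp (comp f g) h;
  comp1m : forall a b (f : Hom a b), comp (idm b) f = f;
  compm1 : forall a b (f : Hom a b), comp f (idm a) = f;
  compDl : forall a b c (f f' : Hom b c) (g : Hom a b),
      comp (f + f') g = comp f g + comp f' g;
  compDr : forall a b c (f : Hom b c) (g g' : Hom a b),
      comp f (g + g') = comp f g + comp f g'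
}.
Arguments Hom {C} : rename.
Arguments idm {C} a : rename.
Arguments comp {C a b c} : rename.

Section Cat.
Variable C : preadd.

Definition castHom (a a' b b' : C) (e1 : a = a') (e2 : b = b') (f : Hom a b)
  : Hom a' b' :=
  match e1 in _ = x return Hom x b' with
  | erefl => match e2 in _ = y return Hom a y with erefl => f end
  end.

Definition mono (a b : C) (f : Hom a b) :=
  forall (W : C) (h1 h2 : Hom W a), comp f h1 = comp f h2 -> h1 = h2.
Definition epi (a b : C) (f : Hom a b) :=
  forall (W : C) (h1 h2 : Hom b W), comp h1 f = comp h2 f -> h1 = h2.

Definition is_zero_obj (z : C) :=
  (forall (a : C) (f : Hom z a), f = 0) /\ (forall (a : C) (f : Hom a z), f = 0).

Definition has_biproduct (a b : C) :=
  exists (p : C) (i1 : Hom a p) (i2 : Hom b p) (p1 : Hom p a) (p2 : Hom p b),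
    [/\ comp p1 i1 = idm a, comp p2 i2 = idm b, comp p1 i2 = 0,
        comp p2 i1 = 0 & comp i1 p1 + comp i2 p2 = idm p].

Definition additive_cat :=
  (exists z : C, is_zero_obj z) /\ (forall a b : C, has_biproduct a b).

Definition idempotent_complete :=
  forall (a : C) (e : Hom a a), comp e e = e ->
    exists (b : C) (r : Hom a b) (s : Hom b a), comp r s = idm b /\ comp s r = e.

Definition is_kernel (K a b : C) (g : Hom a b) (k : Hom K a) :=
  comp g k = 0 /\
  forall (W : C) (h : Hom W a), comp g h = 0 -> exists! u : Hom W K, comp k u = h.
Definition is_cokernel (a b Q : C) (f : Hom a b) (q : Hom b Q) :=
  comp q f = 0 /\
  forall (W : C) (h : Hom b W), comp h f = 0 -> exists! u : Hom Q W, comp u q = h.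

Definition abelian_cat :=
  [/\ additive_cat,
      (forall (a b : C) (f : Hom a b), exists (K : C) (k : Hom K a), is_kernel f k),
      (forall (a b : C) (f : Hom a b), exists (Q : C) (q : Hom b Q), is_cokernel f q),
      (forall (a b : C) (f : Hom a b), mono f -> exists (c : C) (g : Hom b c), is_kernel g f)
    & (forall (a b : C) (f : Hom a b), epi f -> exists (c : C) (g : Hom c a), is_cokernel g f)].

(* exactness at y of x --f--> y --g--> z in an abelian category: im f = ker g,
   i.e. g f = 0 and (coker f) o (ker g) = 0 *)
Definition exact_at (x y z : C) (f : Hom x y) (g : Hom y z) :=
  comp g f = 0 /\
  forall (K : C) (k : Hom K y) (Q : C) (q : Hom y Q),
    is_kernel g k -> is_cokernel f q -> comp q k = 0.

Definition weak_kernel (x y z : C) (f : Hom x y) (g : Hom y z) :=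
  forall (W : C) (h : Hom W y), comp g h = 0 <-> exists h' : Hom W x, h = comp f h'.
Definition weak_cokernel (x y z : C) (g : Hom y z) (f : Hom x y) :=
  forall (W : C) (h : Hom y W), comp h f = 0 <-> exists h' : Hom z W, h = comp h' g.

(* A sequence X^0 -> X^1 -> ... -> X^{n+1} is given by X : nat -> C and
   d k : X k -> X (k+1) (only k <= n matters). *)
(* left n-exact: 0 -> M(W,X^0) -> ... -> M(W,X^{n+1}) exact for all W *)
Definition left_nexact (n : nat) (X : nat -> C) (d : forall k, Hom (X k) (X k.+1)) :=
  forall W : C,
    (forall h : Hom W (X 0%N), comp (d 0%N) h = 0 -> h = 0) /\
    (forall k, (k < n)%N -> forall h : Hom W (X k.+1),
        comp (d k.+1) h = 0 <-> exists h' : Hom W (X k), h = comp (d k) h').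
(* right n-exact: 0 -> M(X^{n+1},W) -> ... -> M(X^0,W) exact for all W *)
Definition right_nexact (n : nat) (X : nat -> C) (d : forall k, Hom (X k) (X k.+1)) :=
  forall W : C,
    (forall h : Hom (X n.+1) W, comp h (d n) = 0 -> h = 0) /\
    (forall k, (k < n)%N -> forall h : Hom (X k.+1) W,
        comp h (d k) = 0 <-> exists h' : Hom (X k.+2) W, h = comp h' (d k.+1)).
Arguments left_nexact n X d : clear implicits.
Arguments right_nexact n X d : clear implicits.
Definition nexact n X d := left_nexact n X d /\ right_nexact n X d.
Arguments nexact n X d : clear implicits.

Definition has_nkernel (n : nat) (Y Z : C) (f : Hom Y Z) :=
  exists (X : nat -> C) (d : forall k, Hom (X k) (X k.+1))
         (eY : X n = Y) (eZ : X n.+1 = Z),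
    castHom eY eZ (d n) = f /\ left_nexact n X d.
Definition has_ncokernel (n : nat) (X0 X1 : C) (f : Hom X0 X1) :=
  exists (X : nat -> C) (d : forall k, Hom (X k) (X k.+1))
         (e0 : X 0%N = X0) (e1 : X 1%N = X1),
    castHom e0 e1 (d 0%N) = f /\ right_nexact n X d.

Definition n_abelian (n : nat) :=
  [/\ additive_cat, idempotent_complete,
      (forall (Y Z : C) (f : Hom Y Z), has_nkernel n f),
      (forall (Y Z : C) (f : Hom Y Z), has_ncokernel n f)
    &
      (forall X d, mono (d 0%N) -> right_nexact n X d -> nexact n X d) /\
      (forall X d, epi (d n) -> left_nexact n X d -> nexact n X d)].

End Cat.
Arguments left_nexact {C} n X d.
Arguments right_nexact {C} n X d.
Arguments nexact {C} n X d.

Record functor (C D : preadd) := Functor {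
  Fob :> C -> D;
  Fhom : forall a b : C, Hom a b -> Hom (Fob a) (Fob b);
  Fid : forall a : C, Fhom (idm a) = idm (Fob a);
  Fcomp : forall (a b c : C) (f : Hom b c) (g : Hom a b),
      Fhom (comp f g) = comp (Fhom f) (Fhom g)
}.
Arguments Fhom {C D} F {a b} : rename.

Definition additive_functor (C D : preadd) (F : functor C D) :=
  forall (a b : C) (f g : Hom a b), Fhom F (f + g) = Fhom F f + Fhom F g.

Definition left_nexact_functor (n : nat) (C D : preadd) (F : functor C D) :=
  forall (X : nat -> C) (d : forall k, Hom (X k) (X k.+1)),
    left_nexact n X d ->
    mono (Fhom F (d 0%N)) /\
    (forall k, (k < n)%N -> exact_at (Fhom F (d k)) (Fhom F (d k.+1))).
Definition right_nexact_functor (n : nat) (C D : preadd) (F : functor C D) :=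
  forall (X : nat -> C) (d : forall k, Hom (X k) (X k.+1)),
    right_nexact n X d ->
    epi (Fhom F (d n)) /\
    (forall k, (k < n)%N -> exact_at (Fhom F (d k)) (Fhom F (d k.+1))).

(* If [f] is a weak kernel of [g], pick an n-kernel [X^0 -> ... -> X^(n-1) -> Y] of
   [g]; its last map [d] satisfies [g d = 0], so it factors through [f].  A left
   n-exact functor makes [F d] and [F g] exact at [F Y], and since [F f] has image
   between that of [F d] and the kernel of [F g], it is exact there too.  Part (ii)
   is dual, using an n-cokernel of [f] whose first map after [Y] factors through [g]. *)
From mathcomp Require Import all_boot ssralg.
Set Implicit Arguments. Unset Strict Implicit.
Import GRing.Theory.
Local Open Scope ring_scope.

Section Preadditive.
Context {C : preadd}.

Lemma comp0m (a b c : C) (f : Hom a b) : comp (0 : Hom b c) f = 0.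
Proof. by apply: (addrI (comp (0 : Hom b c) f)); rewrite -compDl !addr0. Qed.

Lemma compm0 (a b c : C) (f : Hom b c) : comp f (0 : Hom a b) = 0.
Proof. by apply: (addrI (comp f (0 : Hom a b))); rewrite -compDr !addr0. Qed.

Lemma weak_kernel_comp0 (x y z : C) (f : Hom x y) (g : Hom y z) :
  weak_kernel f g -> comp g f = 0.
Proof. by move=> wk; apply/(wk x f); exists (idm x); rewrite compm1. Qed.

Lemma weak_cokernel_comp0 (x y z : C) (f : Hom x y) (g : Hom y z) :
  weak_cokernel g f -> comp g f = 0.
Proof. by move=> wc; apply/(wc z g); exists (idm z); rewrite comp1m. Qed.

Lemma left_nexact_comp0 n (X : nat -> C) (d : forall k, Hom (X k) (X k.+1)) k :
  left_nexact n X d -> (k < n)%N -> comp (d k.+1) (d k) = 0.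
Proof.
by move=> ex lt_kn; apply/((ex (X k)).2 k lt_kn); exists (idm _); rewrite compm1.
Qed.

Lemma right_nexact_comp0 n (X : nat -> C) (d : forall k, Hom (X k) (X k.+1)) k :
  right_nexact n X d -> (k < n)%N -> comp (d k.+1) (d k) = 0.
Proof.
by move=> ex lt_kn; apply/((ex (X k.+2)).2 k lt_kn); exists (idm _); rewrite comp1m.
Qed.

Lemma exact_at_larger_image (w x y z : C) (h : Hom w y) (f : Hom x y)
    (u : Hom w x) (g : Hom y z) :
  (forall (a b : C) (e : Hom a b), exists (Q : C) (q : Hom b Q), is_cokernel e q) ->
  exact_at h g -> h = comp f u -> comp g f = 0 -> exact_at f g.
Proof.
move=> coker [_ ex_h] def_h gf0; subst h; split=> // K k Q q ker_k coker_q.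
have [Q' [q' coker_q']] := coker _ _ (comp f u).
have [v [<- _]] : exists! v : Hom Q' Q, comp v q' = q.
  by apply: coker_q'.2; rewrite compA coker_q.1 comp0m.
by rewrite -compA (ex_h K k Q' q' ker_k coker_q') compm0.
Qed.

Lemma exact_at_smaller_kernel (x y z w : C) (f : Hom x y) (h : Hom y w)
    (g : Hom y z) (u : Hom z w) :
  (forall (a b : C) (e : Hom a b), exists (K : C) (k : Hom K a), is_kernel e k) ->
  exact_at f h -> h = comp u g -> comp g f = 0 -> exact_at f g.
Proof.
move=> ker [_ ex_h] def_h gf0; subst h; split=> // K k Q q ker_k coker_q.
have [K' [k' ker_k']] := ker _ _ (comp u g).
have [v [<- _]] : exists! v : Hom K K', comp k' v = k.
  by apply: ker_k'.2; rewrite -compA ker_k.1 compm0.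
by rewrite compA (ex_h K' k' Q q ker_k' coker_q) comp0m.
Qed.

End Preadditive.

Section AdditiveFunctor.
Variables (M A : preadd) (F : functor M A).
Hypothesis F_add : additive_functor F.

Lemma Fhom0 (a b : M) : Fhom F (0 : Hom a b) = 0.
Proof. by apply: (addrI (Fhom F (0 : Hom a b))); rewrite -F_add !addr0. Qed.

Lemma Fhom_comp0 (x y z : M) (f : Hom x y) (g : Hom y z) :
  comp g f = 0 -> comp (Fhom F g) (Fhom F f) = 0.
Proof. by move=> gf0; rewrite -Fcomp gf0 Fhom0. Qed.

Lemma left_nexact_functor_weak_kernel n (x y z : M) (f : Hom x y) (g : Hom y z) :
  (0 < n)%N -> left_nexact_functor n F -> has_nkernel n g ->
  (forall (a b : A) (e : Hom a b), exists (Q : A) (q : Hom b Q), is_cokernel e q) ->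
  weak_kernel f g -> exact_at (Fhom F f) (Fhom F g).
Proof.
case: n => // m _ FL [X [d [eY [eZ [def_g ex_d]]]]] coker wk.
subst y z g; rewrite /= in wk *.
have [u d_fu] := (wk _ (d m)).1 (left_nexact_comp0 ex_d (ltnSn m)).
apply: (exact_at_larger_image coker ((FL X d ex_d).2 m (ltnSn m))).
  by rewrite d_fu Fcomp.
exact/Fhom_comp0/weak_kernel_comp0.
Qed.

Lemma right_nexact_functor_weak_cokernel n (x y z : M) (f : Hom x y) (g : Hom y z) :
  (0 < n)%N -> right_nexact_functor n F -> has_ncokernel n f ->
  (forall (a b : A) (e : Hom a b), exists (K : A) (k : Hom K a), is_kernel e k) ->
  weak_cokernel g f -> exact_at (Fhom F f) (Fhom F g).
Proof.
case: n => // m _ FR [X [d [eX [eY [def_f ex_d]]]]] ker wc.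
subst x y f; rewrite /= in wc *.
have [u d_ug] := (wc _ (d 1%N)).1 (right_nexact_comp0 ex_d (ltn0Sn m)).
apply: (exact_at_smaller_kernel ker ((FR X d ex_d).2 0%N (ltn0Sn m))).
  by rewrite d_ug Fcomp.
exact/Fhom_comp0/weak_cokernel_comp0.
Qed.

End AdditiveFunctor.

Theorem mainTheorem9 (n : nat) (hn : (0 < n)%N) (M A : preadd)
  (HM : n_abelian M n) (HA : abelian_cat A)
  (F : functor M A) (HF : additive_functor F) :
  (left_nexact_functor n F ->
     forall (X Y Z : M) (f : Hom X Y) (g : Hom Y Z),
       weak_kernel f g -> exact_at (Fhom F f) (Fhom F g)) /\
  (right_nexact_functor n F ->
     forall (X Y Z : M) (f : Hom X Y) (g : Hom Y Z),
       weak_cokernel g f -> exact_at (Fhom F f) (Fhom F g)).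
Proof.
have [_ _ nker ncoker _] := HM; have [_ ker coker _ _] := HA.
split=> [FL X Y Z f g | FR X Y Z f g].
- exact: left_nexact_functor_weak_kernel hn FL (nker _ _ g) coker.
- exact: right_nexact_functor_weak_cokernel hn FR (ncoker _ _ f) ker.
Qed.
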